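(* For any history $\mathcal{F}_{t-1}$, conditioned on the event $E^{\widetilde f}(t)$, for all $\mathbf{x}\in\mathcal{X}$, \[ \mathbb{P}\big(\widetilde f_t(\mathbf{x})+\epsilon_{m,t}>f(\mathbf{x})\mid\mathcal{F}_{t-1}\big)\ge p,\qquad p=\frac{1}{4e\sqrt\pi}. \]
   Context: $\mathcal{X}$ finite subset of the unit ball of $\mathbb{R}^d$; $f\sim\mathcal{GP}(0,k)$, $k$ the exact NTK with $k\le K_0$, $|f|\le B'$; noise $\mathcal{N}(0,\sigma^2)$; $\delta\in(0,1)$, horizon $T$. $\widetilde k$ is the empirical NTK (gradient inner product of a network with $L+1$ layers at initialization), with $|\widetilde k-k|\le(L+1)\varepsilon$ on $\mathcal{X}\times\mathcal{X}$, $(L+1)\varepsilon\le1$, $\sigma^2\le1$, $\hat K_0=\max\{1,K_0\}$. $\beta_t=2\log(2\pi^2t^2|\mathcal{X}|/(3\delta))$. Queries indexed sequentially; $\mathrm{fb}[t]$ is the largest index observed when $\mathbf{x}_t$ is chosen ($t-\mathrm{fb}[t]\le B$); $\mathcal{F}_{t-1}$ is the history of observed inputs/outputs and pending inputs. $\widetilde\mu_{\mathrm{fb}[t]},\widetilde\sigma^2_{\mathrm{fb}[t]}$: GP posterior mean/covariance with kernel $\widetilde k$ given observations $1,\dots,\mathrm{fb}[t]$; given $\mathcal{F}_{t-1}$, $\widetilde f_t\sim\mathcal{GP}(\widetilde\mu_{\mathrm{fb}[t]},\beta_t^2\widetilde\sigma^2_{\mathrm{fb}[t]})$. $\epsilon_{m,t}=2\hat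 K_0\frac{t^2(L+1)\varepsilon}{\sigma^4}(B'+\sigma\sqrt{2\log(4T/\delta)})+\beta_t\sqrt{(L+1)\varepsilon(1+4\hat K_0^2t^2/\sigma^4)}$. $E^{\widetilde f}(t)$ is the event $|\widetilde\mu_{\mathrm{fb}[t]}(\mathbf{x})-f(\mathbf{x})|\le\beta_t\widetilde\sigma_{\mathrm{fb}[t]}(\mathbf{x})+\epsilon_{m,t}$ for all $\mathbf{x}$. *)

From HB Require Import structures.
From mathcomp Require Import all_boot all_order all_algebra.
From mathcomp Require Import all_classical all_reals all_analysis.
Set Implicit Arguments. Unset Strict Implicit. Unset Printing Implicit Defensive.
Import Order.TTheory GRing.Theory Num.Theory.
Local Open Scope ring_scope.

Section Defs.
Variable R : realType.

(* Empirical NTK: gradient inner product <g x, g y> of feature vectors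
   g x : 'rV_p (gradient of the network at initialization). *)
Definition gram_kernel (X : finType) (p : nat) (g : X -> 'rV[R]_p) (x y : X) : R :=
  (g x *m (g y)^T) 0 0.

Definition gram_mx (X : finType) (n : nat) (k : X -> X -> R) (xo : 'I_n -> X) : 'M[R]_n :=
  \matrix_(i, j) k (xo i) (xo j).

Definition kvec (X : finType) (n : nat) (k : X -> X -> R) (xo : 'I_n -> X) (x : X) : 'cV[R]_n :=
  \col_i k (xo i) x.

Definition post_mean (X : finType) (n : nat) (k : X -> X -> R) (s2 : R)
  (xo : 'I_n -> X) (yo : 'cV[R]_n) (x : X) : R :=
  ((kvec k xo x)^T *m invmx (gram_mx k xo + s2%:M) *m yo) 0 0.

Definition post_var (X : finType) (n : nat) (k : X -> X -> R) (s2 : R)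
  (xo : 'I_n -> X) (x : X) : R :=
  k x x - ((kvec k xo x)^T *m invmx (gram_mx k xo + s2%:M) *m kvec k xo x) 0 0.

Definition beta_t (t card : nat) (delta : R) : R :=
  2 * ln (2 * pi ^+ 2 * (t%:R) ^+ 2 * card%:R / (3 * delta)).

Definition eps_mt (t T card L : nat) (delta eps sigma K0hat B' : R) : R :=
  2 * K0hat * ((t%:R) ^+ 2 * (L.+1%:R * eps)) / sigma ^+ 4
     * (B' + sigma * Num.sqrt (2 * ln (4 * T%:R / delta)))
  + beta_t t card delta
     * Num.sqrt ((L.+1%:R * eps) * (1 + 4 * K0hat ^+ 2 * (t%:R) ^+ 2 / sigma ^+ 4)).

End Defs.

From HB Require Import structures.
From mathcomp Require Import all_boot all_order all_algebra.
From mathcomp Require Import all_classical all_reals all_analysis.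
From mathcomp Require Import ring lra measurable_realfun.
Import Order.TTheory GRing.Theory Num.Theory.
Local Open Scope ring_scope.
Local Open Scope classical_set_scope.

(* On the event E(t), f(x) - eps_mt <= mu(x) + s with s = beta_t sd(x), so the
   probability in question is at least the N(mu(x), s^2) mass of the band
   (mu(x) + s, mu(x) + s sqrt 2].  There the density is at least e^-1 times its
   peak 1 / (s sqrt (2 pi)), so the mass is at least (1 - 1/sqrt 2) / (e sqrt pi),
   which exceeds 1 / (4 e sqrt pi) because 3 sqrt 2 >= 4. *)

Section normal_upper_tail.
Variable R : realType.
Implicit Types m s a b c z : R.

Lemma normal_pdf_ge_peak_expN1 m s z : s != 0 -> (z - m) ^+ 2 <= s ^+ 2 *+ 2 ->
  normal_peak s * expR (-1) <= normal_pdf m s z.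
Proof.
move=> s0 zm; rewrite /normal_pdf (negbTE s0) ler_wpM2l ?normal_peak_ge0 //.
have s2_gt0 : 0 < s ^+ 2 *+ 2 by rewrite mulrn_wgt0 // exprn_even_gt0.
by rewrite /normal_fun ler_expR mulNr lerN2 ler_pdivrMr // mul1r.
Qed.

Lemma normal_prob_itv_oc_ge m s a b c : a < b -> 0 <= c ->
  (forall z, a < z <= b -> c <= normal_pdf m s z) ->
  (((b - a) * c)%:E <= normal_prob m s `]a, b])%E.
Proof.
move=> ab c0 pdf_ge.
have -> : ((b - a) * c)%:E = (\int[lebesgue_measure]_(z in `]a, b]) cst c%:E z)%E.
  by rewrite integral_cst //= lebesgue_measure_itv /= lte_fin ab -EFinD -EFinM mulrC.
rewrite /normal_prob; apply: ge0_le_integral => //.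
- apply/measurable_EFinP; exact: measurable_funTS (measurable_normal_pdf m s).
Qed.

(* s (sqrt 2 - 1) is the width of the band on which the density exceeds its
   peak times e^-1. *)
Lemma normal_peak_expN1_band_ge s : 0 < s ->
  1 / (4 * expR 1 * Num.sqrt pi) <= s * (Num.sqrt 2 - 1) * (normal_peak s * expR (-1)).
Proof.
move=> s_gt0.
have sqrt2_sq : Num.sqrt 2 ^+ 2 = 2 :> R by rewrite sqr_sqrtr.
have sqrt2_gt0 : 0 < Num.sqrt 2 :> R by rewrite sqrtr_gt0.
have sqrtpi_gt0 : 0 < Num.sqrt pi :> R by rewrite sqrtr_gt0 pi_gt0.
have e_gt0 : 0 < expR 1 :> R by rewrite expR_gt0.
have peakE : normal_peak s = (s * Num.sqrt 2 * Num.sqrt pi)^-1.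
  rewrite /normal_peak -mulr_natr -mulrA sqrtrM ?sqr_ge0 // sqrtr_sqr gtr0_norm //.
  by rewrite sqrtrM ?pi_ge0 // [Num.sqrt pi * _]mulrC mulrA.
rewrite peakE expRN -subr_ge0.
have -> : s * (Num.sqrt 2 - 1) * ((s * Num.sqrt 2 * Num.sqrt pi)^-1 * (expR 1)^-1)
          - 1 / (4 * expR 1 * Num.sqrt pi)
        = (3 * Num.sqrt 2 - 4) / (4 * Num.sqrt 2 * Num.sqrt pi * expR 1).
  by field; rewrite !gt_eqF.
have three_sqrt2_ge4 : 4 <= 3 * Num.sqrt 2 :> R.
  rewrite -(@ler_pXn2r _ 2) ?nnegrE ?mulr_ge0 ?ltW // exprMn sqrt2_sq; lra.
by rewrite divr_ge0 ?subr_ge0 // !mulr_ge0 // ltW.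
Qed.

Lemma normal_prob_upper_tail_ge m s c : 0 < s -> c <= m + s ->
  ((1 / (4 * expR 1 * Num.sqrt pi))%:E <= normal_prob m s `]c, +oo[)%E.
Proof.
move=> s_gt0 cms.
have sqrt2_gt1 : 1 < Num.sqrt 2 :> R by rewrite -{1}sqrtr1 ltr_sqrt // ltr1n.
have band_sub : `]m + s, m + s * Num.sqrt 2] `<=` `]c, +oo[.
  by move=> z; rewrite /= !in_itv /= andbT => /andP[sz _]; lra.
apply: (@le_trans _ _ (normal_prob m s `]m + s, m + s * Num.sqrt 2])); last first.
  by apply: (le_measure (normal_prob m s)) => //; rewrite inE.
have sqrt2_sq : Num.sqrt 2 ^+ 2 = 2 :> R by rewrite sqr_sqrtr.
apply: (@le_trans _ _ ((s * (Num.sqrt 2 - 1) * (normal_peak s * expR (-1)))%:E)).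
  by rewrite lee_fin normal_peak_expN1_band_ge.
have -> : s * (Num.sqrt 2 - 1) = m + s * Num.sqrt 2 - (m + s) by ring.
apply: normal_prob_itv_oc_ge => [||z /andP[sz zs]].
- by rewrite ltrD2l ltr_pMr.
- by rewrite mulr_ge0 ?normal_peak_ge0 ?expR_ge0.
apply: normal_pdf_ge_peak_expN1; first by rewrite gt_eqF.
have zm : (z - m) ^+ 2 <= (s * Num.sqrt 2) ^+ 2 by nra.
by rewrite exprMn sqrt2_sq mulr_natr in zm.
Qed.

End normal_upper_tail.

Lemma beta_t_gt0 (R : realType) (t card : nat) (delta : R) :
  (0 < t)%N -> (0 < card)%N -> 0 < delta < 1 -> 0 < beta_t t card delta.
Proof.
move=> t_gt0 card_gt0 /andP[delta_gt0 delta_lt1].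
rewrite /beta_t pmulr_rgt0 // ln_gt0 // ltr_pdivlMr ?mulr_gt0 // mul1r.
have pi2_ge4 : 4 <= pi ^+ 2 :> R.
  by rewrite (_ : 4 = 2 ^+ 2) ?lerXn2r ?nnegrE ?pi_ge0 ?pi_ge2 //; lra.
have pi2t2_ge4 : 4 <= pi ^+ 2 * t%:R ^+ 2 :> R.
  by apply: le_trans pi2_ge4 (ler_peMr _ _); rewrite ?sqr_ge0 // expr_ge1 ?ler1n.
have : pi ^+ 2 * t%:R ^+ 2 <= pi ^+ 2 * t%:R ^+ 2 * card%:R :> R.
  by rewrite ler_peMr ?ler1n // mulr_ge0 ?sqr_ge0.
rewrite -!mulrA; lra.
Qed.

Theorem lemma14 (R : realType) (d : nat) (X : finType) (pt : X -> 'rV[R]_d)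
  (pt_inj : injective pt)
  (pt_ball : forall x : X, \sum_(i < d) (pt x 0 i) ^+ 2 <= 1)
  (k : X -> X -> R) (K0 : R) (k_le : forall x y : X, k x y <= K0)
  (f : X -> R) (B' : R) (f_le : forall x : X, `|f x| <= B')
  (sigma : R) (sigma_gt0 : 0 < sigma) (sigma_le : sigma ^+ 2 <= 1)
  (delta : R) (delta_gt0 : 0 < delta) (delta_lt1 : delta < 1)
  (T : nat)
  (L p : nat) (g : X -> 'rV[R]_p) (eps : R) (eps_ge0 : 0 <= eps)
  (kt_approx : forall x y : X, `|gram_kernel g x y - k x y| <= L.+1%:R * eps)
  (eps_le : L.+1%:R * eps <= 1)
  (Bd : nat)
  (xq : nat -> X) (yq : nat -> R) (fb : nat -> nat)
  (fb_lt : forall s : nat, (0 < s)%N -> (fb s < s)%N)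
  (fb_delay : forall s : nat, (s - fb s <= Bd)%N)
  (t : nat) (t_ge1 : (1 <= t)%N) (t_le : (t <= T)%N) :
  let K0hat := Num.max 1 K0 in
  let n := fb t in
  let xo : 'I_n -> X := fun i => xq i.+1 in
  let yo : 'cV[R]_n := \col_i yq i.+1 in
  let mu := post_mean (gram_kernel g) (sigma ^+ 2) xo yo in
  let sd := fun x => Num.sqrt (post_var (gram_kernel g) (sigma ^+ 2) xo x) in
  let beta := beta_t t #|X| delta in
  let em := eps_mt t T #|X| L delta eps sigma K0hat B' in
  (* the event E^{f~}(t) *)
  (forall x : X, `|mu x - f x| <= beta * sd x + em) ->
  forall x : X, 0 < sd x ->
    ((1 / (4 * expR 1 * Num.sqrt pi))%:E
       <= normal_prob (mu x) (beta * sd x) [set z : R | (f x < z + em)%R])%E.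
Proof.
move=> K0hat n xo yo mu sd beta em event x sd_gt0.
have beta_gt0 : 0 < beta.
  by apply: beta_t_gt0 => //; [apply/card_gt0P; exists x | apply/andP].
have -> : [set z : R | f x < z + em] = `]f x - em, +oo[.
  by apply/seteqP; split => z; rewrite /= in_itv /= andbT; lra.
apply: normal_prob_upper_tail_ge; first exact: mulr_gt0.
by have /ler_normlP[+ _] := event x; lra.
Qed.
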